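(* Let $\ell,m$ be positive integers and let $\mu\in\mathcal{P}^{\ell,\ell+m-1}$. Define $\tilde\mu:[\ell]\to[\ell]$ by $\tilde\mu(i)=t(i,\mu(i))$, where $t(r,s)=s$ if $s<r$, $t(r,s)=r$ if $r\leq s\leq m+r-1$, and $t(r,s)=s-m+1$ if $s>m+r-1$. Then $\mu\in\mathcal{P}^\ell(\Omega_m)$ if and only if for every $i\in[\ell]$: (i) if $\tilde\mu(i)>i$ then $\tilde\mu(\tilde\mu(i))>i$; (ii) if $\tilde\mu(i)<i$ then $\tilde\mu(\tilde\mu(i))<i$.
   Context: For a positive integer $n$, $[n]=\{1,\dots,n\}$. $\mathcal{P}^{n,k}$ is the set of partitions $\mu=(\mu_1\geq\dots\geq\mu_n>0)$ with exactly $n$ parts and $\mu_1\leq k$, regarded as weakly decreasing functions $[n]\to[k]$, $\mu(i)=\mu_i$. The map $\tau_k:\mathcal{P}^{n,k}\to\mathcal{P}^{n,k}$ is $\tau_k(\mu_1,\dots,\mu_n)=(k+1-\mu_n,\dots,k+1-\mu_1)$. For $\mu$ with $n-1$ parts and $0<j\leq\mu_{n-1}$, $(\mu:j)$ denotes the partition $(\mu_1,\dots,\mu_{n-1},j)$. Fix $m\in\mathbb{Z}^+$ and let $\Omega_m=\{(j):1\leq j\leq m\}=\mathcal{P}^{1,m}$. Define $\mathcal{P}^1(\Omega_m)=\Omega_m$ and, for $\ell\geq2$, $\mathcal{P}^\ell_{\rm d}(\Omega_m)=\{(\nu:j)\in\mathcal{P}^{\ell,\ell+m-1}:\nu\in\mathcal{P}^{\ell-1}(\Omega_m),\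 1\leq j\leq\nu_{\ell-1}\}$ and $\mathcal{P}^\ell(\Omega_m)=\mathcal{P}^\ell_{\rm d}(\Omega_m)\cup\tau_{\ell+m-1}(\mathcal{P}^\ell_{\rm d}(\Omega_m))$. *)

(* Partitions are represented as seq nat (mu = [:: mu_1; ...; mu_n]). *)
From mathcomp Require Import all_boot.
Set Implicit Arguments. Unset Strict Implicit. Unset Printing Implicit Defensive.

Definition isPart (n k : nat) (mu : seq nat) : Prop :=
  size mu = n /\ sorted geq mu /\ all (fun x => (0 < x) && (x <= k)) mu.

Definition tau (k : nat) (mu : seq nat) : seq nat :=
  rev (map (fun x => k.+1 - x) mu).

(* P^l_d built from a predicate P describing P^{l-1}(Omega_m):
   {(nu:j) in P^{l,l+m-1} : nu in P^{l-1}(Omega_m), 1 <= j <= nu_{l-1}} *)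
Definition Pd_step (P : seq nat -> Prop) (m l : nat) (mu : seq nat) : Prop :=
  exists (nu : seq nat) (j : nat),
    P nu /\ mu = rcons nu j /\ 1 <= j <= last 0 nu /\ isPart l (l + m - 1) mu.

Fixpoint inPOmega (m l : nat) (mu : seq nat) {struct l} : Prop :=
  match l with
  | 0 => False
  | l'.+1 =>
      if l' == 0 then exists j, mu = [:: j] /\ 1 <= j <= m
      else Pd_step (inPOmega m l') m l mu
           \/ exists x, Pd_step (inPOmega m l') m l x /\ mu = tau (l + m - 1) x
  end.

Definition tfun (m r s : nat) : nat :=
  if s < r then s else if s <= m + r - 1 then r else s - m + 1.

(* mu~(i) = t(i, mu(i)), with mu(i) = mu_i (1-indexed) *)
Definition mutilde (m : nat) (mu : seq nat) (i : nat) : nat :=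
  tfun m i (nth 0 mu i.-1).

(* Both conditions are symmetric under [i |-> l+1-i], which is how [tau] acts on
   [mu~]; and appending a part [j <= mu_l] leaves [mu~] unchanged on [1..l] while
   [mu~(l+1) = t(l+1, j)] is either [l+1] or [j], on which the conditions hold.
   Conversely, if [mu_1 < l+m-1] then [mu] is [nu] with a part appended, and [nu]
   still satisfies the conditions; if [mu_l > 1] the same applies to [tau mu].
   The remaining case [mu_1 = l+m-1], [mu_l = 1] gives [mu~(1) = l],
   [mu~(l) = 1], violating (i) at [i = 1]. *)
From mathcomp Require Import all_boot zify.
Set Implicit Arguments. Unset Strict Implicit. Unset Printing Implicit Defensive.

Definition tilde_cond (m l : nat) (mu : seq nat) : Prop :=
  forall i, 1 <= i <= l ->
    (mutilde m mu i > i -> mutilde m mu (mutilde m mu i) > i) /\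
    (mutilde m mu i < i -> mutilde m mu (mutilde m mu i) < i).

Lemma isPart_nth n k mu i : isPart n k mu -> i < n -> 0 < nth 0 mu i <= k.
Proof. by case=> <- [_ /(all_nthP 0)]; apply. Qed.

Lemma isPart_nth_mono n k mu i j : isPart n k mu -> i <= j < n ->
  nth 0 mu j <= nth 0 mu i.
Proof.
case=> <- [sorted_mu _] /andP [le_ij lt_j].
have geq_trans : transitive geq by move=> a b c /=; lia.
have geq_refl : reflexive geq by move=> a /=.
apply: (sorted_leq_nth geq_trans geq_refl 0 sorted_mu) => //; rewrite inE; lia.
Qed.

Lemma nth_tau k mu i : i < size mu ->
  nth 0 (tau k mu) i = k.+1 - nth 0 mu (size mu - i.+1).
Proof. by move=> lt_i; rewrite /tau nth_rev size_map // (nth_map 0) //; lia. Qed.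

Lemma isPart_tau n k mu : isPart n k mu -> isPart n k (tau k mu).
Proof.
case=> size_mu [sorted_mu all_mu]; split; first by rewrite size_rev size_map.
split; last by apply/allP => x; rewrite mem_rev => /mapP [y /(allP all_mu)]; lia.
rewrite rev_sorted sorted_map.
by apply: sub_sorted sorted_mu => a b /=; lia.
Qed.

Lemma tauK n k mu : isPart n k mu -> tau k (tau k mu) = mu.
Proof.
case=> _ [_ /allP all_mu]; rewrite /tau map_rev revK -map_comp -[RHS]map_id.
by apply/eq_in_map => x /all_mu /=; lia.
Qed.

Lemma isPart_rcons n k nu j : 0 < n -> isPart n.+1 k.+1 (rcons nu j) ->
  nth 0 nu 0 <= k -> isPart n k nu /\ 1 <= j <= last 0 nu.
Proof.
move=> n_gt0 part_mu head_le.
have size_nu : size nu = n by case: part_mu => /eqP; rewrite size_rcons eqSS => /eqP.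
have nth_mu i : i < n -> nth 0 (rcons nu j) i = nth 0 nu i.
  by move=> lt_i; rewrite nth_rcons size_nu lt_i.
have last_mu : nth 0 (rcons nu j) n = j by rewrite nth_rcons size_nu ltnn eqxx.
split; last first.
  have := isPart_nth_mono part_mu (_ : n.-1 <= n < n.+1).
  have := isPart_nth part_mu (ltnSn n).
  rewrite last_mu nth_mu -?nth_last ?size_nu; lia.
split=> //; split.
  by case: part_mu => _ [+ _]; rewrite -cats1 => /cat_sorted2 [].
apply/(all_nthP 0) => i; rewrite size_nu => lt_i.
have := isPart_nth part_mu (ltn_trans lt_i (ltnSn n)).
have := isPart_nth_mono part_mu (_ : 0 <= i < n.+1).
rewrite !nth_mu //; lia.
Qed.

Lemma tfun_bounded m L r s : 1 <= r <= L -> 1 <= s <= L + m - 1 ->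
  1 <= tfun m r s <= L.
Proof. by move=> *; rewrite /tfun; do ! case: ifP => ?; lia. Qed.

Lemma mutilde_bounded l m mu i : isPart l (l + m - 1) mu -> 1 <= i <= l ->
  1 <= mutilde m mu i <= l.
Proof.
move=> part_mu i_in; apply: tfun_bounded => //.
have := isPart_nth part_mu (_ : i.-1 < l); lia.
Qed.

Lemma mutilde_tau l m mu i : isPart l (l + m - 1) mu -> 1 <= i <= l ->
  mutilde m (tau (l + m - 1) mu) i = l.+1 - mutilde m mu (l.+1 - i).
Proof.
move=> part_mu i_in; have size_mu : size mu = l by case: part_mu.
rewrite /mutilde nth_tau size_mu; last lia.
have -> : l - (i.-1).+1 = (l.+1 - i).-1 by lia.
have := isPart_nth part_mu (_ : (l.+1 - i).-1 < l).
move: (nth 0 mu _) => s s_in.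
by rewrite /tfun; do ! case: ifP => ?; lia.
Qed.

Lemma tilde_cond_tau l m mu : isPart l (l + m - 1) mu ->
  tilde_cond m l mu -> tilde_cond m l (tau (l + m - 1) mu).
Proof.
move=> part_mu cond_mu i i_in.
have i'_in : 1 <= l.+1 - i <= l by lia.
have t_in := mutilde_bounded part_mu i'_in.
rewrite (mutilde_tau part_mu i_in) (mutilde_tau part_mu); last lia.
have -> : l.+1 - (l.+1 - mutilde m mu (l.+1 - i)) = mutilde m mu (l.+1 - i) by lia.
have := cond_mu _ i'_in; lia.
Qed.

Lemma mutilde_rcons m nu j i : 1 <= i <= size nu ->
  mutilde m (rcons nu j) i = mutilde m nu i.
Proof. by move=> i_in; rewrite /mutilde nth_rcons ifT //; lia. Qed.

Lemma mutilde_rcons_size m nu j :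
  mutilde m (rcons nu j) (size nu).+1 = tfun m (size nu).+1 j.
Proof. by rewrite /mutilde nth_rcons ltnn eqxx. Qed.

Lemma mutilde_rcons_iter l m nu j i : isPart l (l + m - 1) nu ->
  1 <= i <= l ->
  mutilde m (rcons nu j) (mutilde m (rcons nu j) i) = mutilde m nu (mutilde m nu i).
Proof.
move=> part_nu i_in; have size_nu : size nu = l by case: part_nu.
have t_in := mutilde_bounded part_nu i_in.
rewrite (mutilde_rcons _ _ (i := i)) ?size_nu //.
by rewrite mutilde_rcons ?size_nu.
Qed.

Lemma tilde_cond_rcons_restrict l m nu j : isPart l (l + m - 1) nu ->
  tilde_cond m l.+1 (rcons nu j) -> tilde_cond m l nu.
Proof.
move=> part_nu cond_mu i i_in; have size_nu : size nu = l by case: part_nu.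
have /cond_mu : 1 <= i <= l.+1 by lia.
by rewrite (mutilde_rcons_iter j part_nu i_in) mutilde_rcons ?size_nu.
Qed.

Lemma tilde_cond_rcons l m nu j : isPart l (l + m - 1) nu ->
  1 <= j <= last 0 nu -> tilde_cond m l nu -> tilde_cond m l.+1 (rcons nu j).
Proof.
move=> part_nu j_in cond_nu i i_in; have size_nu : size nu = l by case: part_nu.
have [le_il|] := leqP i l.
  have i'_in : 1 <= i <= l by lia.
  rewrite (mutilde_rcons_iter j part_nu i'_in) mutilde_rcons ?size_nu //.
  exact: cond_nu.
have l_gt0 : 0 < l by move: j_in; rewrite -size_nu; case: (nu) => //=; lia.
have last_le : last 0 nu <= l + m - 1.
  by rewrite -nth_last size_nu; have := isPart_nth part_nu (_ : l.-1 < l); lia.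
move=> lt_li; have -> : i = (size nu).+1 by lia.
rewrite mutilde_rcons_size /tfun; case: ifP => lt_j; last by do ! case: ifP; lia.
rewrite mutilde_rcons ?size_nu; last lia.
have := mutilde_bounded part_nu (_ : 1 <= j <= l); lia.
Qed.

Lemma inPOmega_isPart m l mu : inPOmega m l mu -> isPart l (l + m - 1) mu.
Proof.
case: l => [|l] //=; case: eqP => [-> [j [-> j_in]]|_].
  by split=> //=; rewrite andbT; lia.
by case=> [[nu [j [_ [_ [_ ?]]]]] | [x [[nu [j [_ [_ [_ ?]]]]] ->]]] //; apply: isPart_tau.
Qed.

Lemma inPOmega_tilde_cond m l mu : inPOmega m l mu -> tilde_cond m l mu.
Proof.
elim: l mu => [|[|l] IH] mu //=.
  case=> j [-> j_in] i i_in; have -> : i = 1 by lia.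
  by have -> : mutilde m [:: j] 1 = 1 by rewrite /mutilde /tfun /=; do ! case: ifP; lia.
have Pd_cond x : Pd_step (inPOmega m l.+1) m l.+2 x -> tilde_cond m l.+2 x.
  case=> nu [j [in_nu [-> [j_in _]]]].
  exact: tilde_cond_rcons (inPOmega_isPart in_nu) j_in (IH _ in_nu).
case=> [/Pd_cond // | [x [Pd_x ->]]].
by apply: tilde_cond_tau (Pd_cond _ Pd_x); case: Pd_x => [? [? [_ [_ [_ ?]]]]].
Qed.

Lemma Pd_step_tilde_cond (P : seq nat -> Prop) m l mu : 0 < m -> 0 < l ->
  (forall nu, isPart l (l + m - 1) nu -> tilde_cond m l nu -> P nu) ->
  isPart l.+1 (l.+1 + m - 1) mu -> tilde_cond m l.+1 mu -> nth 0 mu 0 < l + m ->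
  Pd_step P m l.+1 mu.
Proof.
move=> m_gt0 l_gt0 P_cond part_mu cond_mu head_lt.
case/lastP: mu part_mu cond_mu head_lt => [[] //|nu j] part_mu cond_mu head_lt.
have size_nu : size nu = l by case: part_mu => /eqP; rewrite size_rcons eqSS => /eqP.
have [part_nu j_in] : isPart l (l + m - 1) nu /\ 1 <= j <= last 0 nu.
  apply: isPart_rcons => //; first by have -> : (l + m - 1).+1 = l.+1 + m - 1 by lia.
  by move: head_lt; rewrite nth_rcons size_nu l_gt0; lia.
by exists nu, j; split; first exact: P_cond (tilde_cond_rcons_restrict part_nu cond_mu).
Qed.

Lemma tilde_cond_extremal l m mu : 1 < l ->
  nth 0 mu 0 = l + m - 1 -> nth 0 mu l.-1 = 1 -> ~ tilde_cond m l mu.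
Proof.
move=> l_gt1 head_max last_min /(_ 1) cond_mu.
have first_to_last : mutilde m mu 1 = l.
  by rewrite /mutilde head_max /tfun; do ! case: ifP; lia.
have last_to_first : mutilde m mu l = 1.
  by rewrite /mutilde last_min /tfun; do ! case: ifP; lia.
have /cond_mu : 1 <= 1 <= l by lia.
by rewrite first_to_last last_to_first; lia.
Qed.

Lemma tilde_cond_inPOmega m l mu : 0 < m -> 0 < l -> isPart l (l + m - 1) mu ->
  tilde_cond m l mu -> inPOmega m l mu.
Proof.
move=> m_gt0; elim: l mu => [|[|l] IH] mu // _ part_mu cond_mu /=.
  case: part_mu => size_mu [_ all_mu]; clear cond_mu.
  case: mu size_mu all_mu => [|j []] //= _ /andP [j_in _].
  by exists j; split=> //; lia.
have size_mu : size mu = l.+2 by case: part_mu.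
have Pd_P := Pd_step_tilde_cond m_gt0 (ltn0Sn l) (fun nu => IH nu (ltn0Sn l)).
have [head_lt|head_max] := ltnP (nth 0 mu 0) (l.+1 + m); first by left; apply: Pd_P.
have [last_gt1|last_le1] := ltnP 1 (nth 0 mu l.+1).
  right; exists (tau (l.+2 + m - 1) mu); split; last by rewrite (tauK part_mu).
  apply: Pd_P; [exact: isPart_tau | exact: tilde_cond_tau |].
  by rewrite nth_tau size_mu // subSS subn0; lia.
have /andP [_ head_le] := isPart_nth part_mu (ltn0Sn l.+1).
have /andP [last_gt0 _] := isPart_nth part_mu (ltnSn l.+1).
by exfalso; apply: (tilde_cond_extremal _ _ _ cond_mu) => //=; lia.
Qed.

Theorem theorem3p6 (l m : nat) (mu : seq nat) :
  0 < l -> 0 < m -> isPart l (l + m - 1) mu ->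
  (inPOmega m l mu <->
   forall i, 1 <= i <= l ->
     (mutilde m mu i > i -> mutilde m mu (mutilde m mu i) > i) /\
     (mutilde m mu i < i -> mutilde m mu (mutilde m mu i) < i)).
Proof.
move=> l_gt0 m_gt0 part_mu; split; first exact: inPOmega_tilde_cond.
exact: tilde_cond_inPOmega.
Qed.
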